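(* There exists an infinite symmetric matrix $M=\{m_{i,j}\}_{i,j\in \mathbf{N}}$ such that: (i) every entry $m_{i,j}$ equals $0$ or $1/4$; (ii) the support (set of indices of nonzero entries) of each row and of each column has cardinality $4$; (iii) $I-M$, acting as an operator on $\ell^2(\mathbf{N})$, is invertible on $\ell^2(\mathbf{N})$, but $I-M$, acting as an operator on $\ell^{\infty}(\mathbf{N})$, is not invertible on $\ell^{\infty}(\mathbf{N})$.
   Context: An infinite matrix $M=\{m_{i,j}\}_{i,j\in\mathbf{N}}$ acts on sequences by $(Mf)(i)=\sum_j m_{i,j}f(j)$; since each row and column has finitely many nonzero entries bounded by $1/4$, $M$ defines a bounded operator on $\ell^p(\mathbf{N})$ for every $1\le p\le\infty$. $I$ denotes the identity matrix/operator. *)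

From Stdlib Require Import Reals Lra.
From Coquelicot Require Import Coquelicot.
Open Scope R_scope.

Definition matrixN := nat -> nat -> R.

(* Action (M f)(i) = sum_j m_{i,j} f(j) (a finite sum when rows have
   finite support; Series is the total infinite-sum operator). *)
Definition mat_apply (M : matrixN) (f : nat -> R) : nat -> R :=
  fun i => Series (fun j => M i j * f j).

Definition I_minus (M : matrixN) (f : nat -> R) : nat -> R :=
  fun i => f i - mat_apply M f i.

Definition in_l2 (f : nat -> R) : Prop := ex_series (fun j => (f j) ^ 2).
Definition in_linf (f : nat -> R) : Prop := exists B, forall j, Rabs (f j) <= B.

Definition invertible_l2 (T : (nat -> R) -> (nat -> R)) : Prop :=
  exists S : (nat -> R) -> (nat -> R),
    (forall f, in_l2 f -> in_l2 (S f)) /\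
    (exists C, forall f, in_l2 f ->
        Series (fun j => (S f j) ^ 2) <= C * Series (fun j => (f j) ^ 2)) /\
    (forall f, in_l2 f -> S (T f) = f) /\
    (forall f, in_l2 f -> T (S f) = f).

Definition invertible_linf (T : (nat -> R) -> (nat -> R)) : Prop :=
  exists S : (nat -> R) -> (nat -> R),
    (forall f, in_linf f -> in_linf (S f)) /\
    (exists C, forall f B, (forall j, Rabs (f j) <= B) ->
        forall i, Rabs (S f i) <= C * B) /\
    (forall f, in_linf f -> S (T f) = f) /\
    (forall f, in_linf f -> T (S f) = f).

Definition support_card4 (P : nat -> Prop) : Prop :=
  exists a b c d : nat,
    a <> b /\ a <> c /\ a <> d /\ b <> c /\ b <> d /\ c <> d /\
    forall j, P j <-> (j = a \/ j = b \/ j = c \/ j = d).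

(* Let [parent] be a three-to-one map of [N] with no fixed points and no
   2-cycles, and let [M] be [1/4] times the adjacency matrix of the 4-regular
   graph with edges [x -- parent x].  Every row of [M] sums to [1], so [I - M]
   kills the constant sequences and is not invertible on [l^infty].  On [l^2],
   Cauchy-Schwarz with weight [2] on the parent and [6] on each child gives
   [||M f||^2 <= 3/4 ||f||^2], because every index is the parent of three points
   and the child of one; hence [I - M] is inverted by the Neumann series
   [sum_k M^k], whose [l^2] bound is obtained on the partial sums, which satisfy
   [P_(K+1) f = f + P_K (M f)], and passed to the pointwise limit. *)

From Stdlib Require Import Reals Lra Lia List FunctionalExtensionality.
From Coquelicot Require Import Coquelicot.
Import ListNotations.
Open Scope R_scope.
Set Bullet Behavior "Strict Subproofs".

Definition sq_norm (f : nat -> R) : R := Series (fun j => f j ^ 2).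

Lemma sum_le_Series_nonneg (a : nat -> R) N :
  (forall n, 0 <= a n) -> ex_series a -> sum_f_R0 a N <= Series a.
Proof.
  intros Ha Hex.
  apply Series_correct, is_series_Reals, is_lim_seq_Reals in Hex.
  apply (is_lim_seq_incr_compare _ _ Hex).
  intro n. simpl. specialize (Ha (S n)). lra.
Qed.

Lemma sum_f_R0_mono_nonneg (a : nat -> R) n m :
  (forall k, 0 <= a k) -> (n <= m)%nat -> sum_f_R0 a n <= sum_f_R0 a m.
Proof. intros Ha H. induction H as [|m _ IH]; simpl; [lra|]. specialize (Ha (S m)). lra. Qed.

Lemma ex_series_nonneg_bounded (a : nat -> R) (B : R) :
  (forall n, 0 <= a n) -> (forall N, sum_f_R0 a N <= B) ->
  ex_series a /\ Series a <= B.
Proof.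
  intros Ha HB.
  destruct (growing_cv (fun N => sum_f_R0 a N)) as [l Hl].
  - intro n. simpl. specialize (Ha (S n)). lra.
  - exists B. intros x [N ->]. apply HB.
  - assert (Hs : is_series a l) by (apply is_series_Reals; exact Hl).
    split; [exists l; exact Hs|].
    rewrite (is_series_unique _ _ Hs).
    apply is_lim_seq_Reals in Hl.
    exact (is_lim_seq_le _ _ l B HB Hl (is_lim_seq_const B)).
Qed.

Lemma sq_norm_nonneg f : in_l2 f -> 0 <= sq_norm f.
Proof.
  intros Hf. apply Rle_trans with (sum_f_R0 (fun j => f j ^ 2) 0).
  - apply pow2_ge_0.
  - apply sum_le_Series_nonneg; [intro; apply pow2_ge_0 | exact Hf].
Qed.

Lemma sq_le_sq_norm f x : in_l2 f -> f x ^ 2 <= sq_norm f.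
Proof.
  intros Hf. apply Rle_trans with (sum_f_R0 (fun j => f j ^ 2) x).
  - destruct x; cbn [sum_f_R0]; [lra|].
    pose proof (cond_pos_sum (fun j => f j ^ 2) x (fun j => pow2_ge_0 (f j))). lra.
  - apply sum_le_Series_nonneg; [intro; apply pow2_ge_0 | exact Hf].
Qed.

Lemma sq_norm_add_le f g t : 0 < t -> in_l2 f -> in_l2 g ->
  in_l2 (fun j => f j + g j) /\
  sq_norm (fun j => f j + g j) <= (1 + / t) * sq_norm f + (1 + t) * sq_norm g.
Proof.
  intros Ht Hf Hg.
  assert (Hpt : forall j, (f j + g j) ^ 2 <= (1 + / t) * f j ^ 2 + (1 + t) * g j ^ 2).
  { intro j.
    assert (E : (1 + / t) * f j ^ 2 + (1 + t) * g j ^ 2 - (f j + g j) ^ 2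
                = (f j - t * g j) ^ 2 / t) by (field; lra).
    assert (0 <= (f j - t * g j) ^ 2 / t)
      by (apply Rdiv_le_0_compat; [apply pow2_ge_0 | exact Ht]).
    lra. }
  assert (Hsum : is_series (fun j => (1 + / t) * f j ^ 2 + (1 + t) * g j ^ 2)
                   ((1 + / t) * sq_norm f + (1 + t) * sq_norm g)).
  { apply (is_series_plus (fun j => (1 + / t) * f j ^ 2) (fun j => (1 + t) * g j ^ 2));
      [exact (is_series_scal_l _ _ _ (Series_correct _ Hf))
      |exact (is_series_scal_l _ _ _ (Series_correct _ Hg))]. }
  apply ex_series_nonneg_bounded; [intro; apply pow2_ge_0|].
  intro N. apply Rle_trans with (sum_f_R0 (fun j => (1 + / t) * f j ^ 2 + (1 + t) * g j ^ 2) N).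
  - apply sum_Rle. intros; apply Hpt.
  - rewrite <- (is_series_unique _ _ Hsum). apply sum_le_Series_nonneg; [|eexists; exact Hsum].
    intro n. pose proof (pow2_ge_0 (f n)). pose proof (pow2_ge_0 (g n)).
    pose proof (Rinv_0_lt_compat _ Ht). nra.
Qed.

Lemma Series_telescope (a : nat -> R) : is_lim_seq a 0 ->
  Series (fun k => a k - a (S k)) = a 0%nat.
Proof.
  intros Ha. apply is_series_unique, is_series_Reals, is_lim_seq_Reals.
  apply is_lim_seq_ext with (fun n => a 0%nat - a (S n)).
  { induction n as [|n IH]; simpl; [reflexivity|]. rewrite <- IH. ring. }
  rewrite <- (Rminus_0_r (a 0%nat)) at 1.
  apply is_lim_seq_minus'; [apply is_lim_seq_const|].
  apply is_lim_seq_incr_1 in Ha. exact Ha.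
Qed.

Lemma is_lim_seq_sum_f_R0 (u : nat -> nat -> R) (l : nat -> R) N :
  (forall x, is_lim_seq (fun K => u K x) (l x)) ->
  is_lim_seq (fun K => sum_f_R0 (u K) N) (sum_f_R0 l N).
Proof.
  intros Hu. induction N as [|N IH]; simpl; [apply Hu|].
  apply is_lim_seq_plus'; [exact IH | apply Hu].
Qed.

Section Neumann.

Variable A : (nat -> R) -> nat -> R.
Variable q : R.
Hypothesis q_bounds : 0 < q < 1.
Hypothesis A_sub : forall f g x, A (fun y => f y - g y) x = A f x - A g x.
Hypothesis A_contraction :
  forall f, in_l2 f -> in_l2 (A f) /\ sq_norm (A f) <= q * sq_norm f.
Hypothesis A_is_series : forall (g : nat -> nat -> R) (h : nat -> R),
  (forall y, is_series (fun k => g k y) (h y)) ->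
  forall x, is_series (fun k => A (g k) x) (A h x).

Lemma iter_l2 k f : in_l2 f ->
  in_l2 (Nat.iter k A f) /\ sq_norm (Nat.iter k A f) <= q ^ k * sq_norm f.
Proof.
  intros Hf. induction k as [|k [IH1 IH2]]; simpl; [split; [exact Hf | lra]|].
  destruct (A_contraction _ IH1) as [H1 H2]. split; [exact H1|].
  apply Rle_trans with (q * (q ^ k * sq_norm f)); [|lra].
  apply Rle_trans with (1 := H2). apply Rmult_le_compat_l; lra.
Qed.

Lemma iter_pointwise_bound k f x : in_l2 f ->
  Rabs (Nat.iter k A f x) <= sqrt (sq_norm f) * sqrt q ^ k.
Proof.
  intros Hf. destruct (iter_l2 k f Hf) as [H1 H2].
  pose proof (sq_norm_nonneg f Hf) as HF.
  assert (Hb : 0 <= sqrt (sq_norm f) * sqrt q ^ k)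
    by (apply Rmult_le_pos; [apply sqrt_pos | apply pow_le, sqrt_pos]).
  rewrite <- (Rabs_pos_eq _ Hb). apply Rsqr_le_abs_0. rewrite !Rsqr_pow2.
  rewrite Rpow_mult_distr, <- pow_mult, Nat.mul_comm, pow_mult, !pow2_sqrt by lra.
  pose proof (sq_le_sq_norm _ x H1). lra.
Qed.

Lemma ex_series_iter f x : in_l2 f -> ex_series (fun k => Nat.iter k A f x).
Proof.
  intros Hf.
  apply (@ex_series_le R_AbsRing R_CompleteNormedModule _
           (fun k => sqrt (sq_norm f) * sqrt q ^ k)).
  - intro k. apply iter_pointwise_bound, Hf.
  - apply (@ex_series_scal_l R_AbsRing R_CompleteNormedModule), ex_series_geom.
    rewrite Rabs_pos_eq by apply sqrt_pos. rewrite <- sqrt_1.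
    apply sqrt_lt_1_alt. lra.
Qed.

Definition neumann (f : nat -> R) (x : nat) : R := Series (fun k => Nat.iter k A f x).

Lemma neumann_sub_A f x : in_l2 f -> neumann f x - A (neumann f) x = f x.
Proof.
  intros Hf.
  assert (H : is_series (fun k => Nat.iter (S k) A f x) (A (neumann f) x)).
  { apply (A_is_series (fun k => Nat.iter k A f)).
    intro y. apply Series_correct, ex_series_iter, Hf. }
  unfold neumann at 1. rewrite Series_incr_1 by (apply ex_series_iter, Hf).
  rewrite (is_series_unique _ _ H). simpl. ring.
Qed.

Lemma iter_sub k f g x :
  Nat.iter k A (fun y => f y - g y) x = Nat.iter k A f x - Nat.iter k A g x.
Proof.
  revert x. induction k as [|k IH]; intro x; simpl; [reflexivity|].
  rewrite <- A_sub. f_equal. apply functional_extensionality, IH.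
Qed.

Lemma neumann_of_sub_A f x : in_l2 f -> neumann (fun y => f y - A f y) x = f x.
Proof.
  intros Hf. unfold neumann.
  rewrite (Series_ext _ (fun k => Nat.iter k A f x - Nat.iter (S k) A f x)).
  - apply Series_telescope, ex_series_lim_0, ex_series_iter, Hf.
  - intro k. rewrite iter_sub, Nat.iter_succ_r. reflexivity.
Qed.

Definition neumann_partial (K : nat) (f : nat -> R) (x : nat) : R :=
  sum_f_R0 (fun k => Nat.iter k A f x) K.

Lemma neumann_partial_succ K f :
  neumann_partial (S K) f = fun x => f x + neumann_partial K (A f) x.
Proof.
  apply functional_extensionality. intro x. unfold neumann_partial.
  rewrite decomp_sum by lia. simpl pred. f_equal.
  apply sum_eq. intros k _. rewrite Nat.iter_succ_r. reflexivity.
Qed.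

Definition neumann_bound : R := 2 * (1 + q) / (1 - q) ^ 2.

Lemma neumann_partial_l2 K f : in_l2 f ->
  in_l2 (neumann_partial K f) /\
  sq_norm (neumann_partial K f) <= neumann_bound * sq_norm f.
Proof.
  revert f. unfold neumann_bound.
  set (C := 2 * (1 + q) / (1 - q) ^ 2).
  assert (HC : 1 <= C).
  { unfold C. apply Rmult_le_reg_r with ((1 - q) ^ 2); [nra|].
    unfold Rdiv. rewrite Rmult_assoc, Rinv_l by nra. nra. }
  induction K as [|K IH]; intros f Hf; pose proof (sq_norm_nonneg f Hf) as HF.
  - split; [exact Hf|]. change (sq_norm f <= C * sq_norm f). nra.
  - destruct (A_contraction f Hf) as [HAf1 HAf2].
    destruct (IH (A f) HAf1) as [HP1 HP2].
    set (t := (1 - q) / (2 * q)).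
    assert (Ht : 0 < t) by (unfold t; apply Rdiv_lt_0_compat; lra).
    destruct (sq_norm_add_le f (neumann_partial K (A f)) t Ht Hf HP1) as [Hs1 Hs2].
    rewrite neumann_partial_succ. split; [exact Hs1|].
    (* [t] makes [(1 + t) q = (1 + q) / 2 < 1], and [C] solves the resulting recursive bound. *)
    assert (EC : (1 + / t) + (1 + t) * q * C = C) by (unfold C, t; field; lra).
    apply Rle_trans with (1 := Hs2).
    apply Rle_trans with ((1 + / t) * sq_norm f + (1 + t) * (C * (q * sq_norm f))).
    + apply Rplus_le_compat_l, Rmult_le_compat_l; [lra|].
      apply Rle_trans with (1 := HP2). apply Rmult_le_compat_l; [lra | exact HAf2].
    + right. transitivity (((1 + / t) + (1 + t) * q * C) * sq_norm f); [ring|].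
      rewrite EC. reflexivity.
Qed.

Lemma neumann_l2 f : in_l2 f ->
  in_l2 (neumann f) /\ sq_norm (neumann f) <= neumann_bound * sq_norm f.
Proof.
  intros Hf.
  assert (Hconv : forall x, is_lim_seq (fun K => neumann_partial K f x) (neumann f x)).
  { intro x. apply is_lim_seq_Reals.
    exact (proj1 (is_series_Reals _ _) (Series_correct _ (ex_series_iter f x Hf))). }
  assert (Hlim : forall x, is_lim_seq (fun K => neumann_partial K f x ^ 2) (neumann f x ^ 2)).
  { intro x. rewrite <- Rsqr_pow2.
    apply is_lim_seq_ext with (fun K => neumann_partial K f x * neumann_partial K f x).
    { intro K. apply Rsqr_pow2. }
    apply is_lim_seq_mult'; apply Hconv. }
  apply ex_series_nonneg_bounded; [intro; apply pow2_ge_0|].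
  intro N.
  assert (Hbound : forall K,
    sum_f_R0 (fun x => neumann_partial K f x ^ 2) N <= neumann_bound * sq_norm f).
  { intro K. destruct (neumann_partial_l2 K f Hf) as [HP1 HP2].
    apply Rle_trans with (2 := HP2), sum_le_Series_nonneg; [intro; apply pow2_ge_0 | exact HP1]. }
  exact (is_lim_seq_le _ _ _ _ Hbound (is_lim_seq_sum_f_R0 _ _ N Hlim) (is_lim_seq_const _)).
Qed.

Theorem neumann_invertible_l2 : invertible_l2 (fun f i => f i - A f i).
Proof.
  exists neumann. split; [|split; [|split]].
  - intros f Hf. apply neumann_l2, Hf.
  - exists neumann_bound. intros f Hf. apply neumann_l2, Hf.
  - intros f Hf. apply functional_extensionality. intro x. apply neumann_of_sub_A, Hf.
  - intros f Hf. apply functional_extensionality. intro x. apply neumann_sub_A, Hf.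
Qed.

End Neumann.

Open Scope nat_scope.

(* [0 -> 1 -> 2 -> 0] is a 3-cycle; besides its predecessor on the cycle, each
   [x < 3] has the children [3 + 2x] and [4 + 2x], and each [x >= 3] has the
   children [3x], [3x + 1] and [3x + 2]. *)
Definition parent (m : nat) : nat :=
  if m <? 9 then nth m [1; 2; 0; 0; 0; 1; 1; 2; 2] 0 else m / 3.
Definition child1 (x : nat) : nat := if x <? 3 then nth x [2; 0; 1] 0 else 3 * x.
Definition child2 (x : nat) : nat := if x <? 3 then 3 + 2 * x else 3 * x + 1.
Definition child3 (x : nat) : nat := if x <? 3 then 4 + 2 * x else 3 * x + 2.

Lemma div3_bounds j : 3 * (j / 3) <= j < 3 * (j / 3) + 3.
Proof. pose proof (Nat.div_mod j 3). pose proof (Nat.mod_upper_bound j 3). lia. Qed.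

Lemma parent_large m : 9 <= m -> parent m = m / 3.
Proof. intros H. unfold parent. destruct (Nat.ltb_spec m 9); [lia | reflexivity]. Qed.

Lemma children_large x : 3 <= x ->
  child1 x = 3 * x /\ child2 x = 3 * x + 1 /\ child3 x = 3 * x + 2.
Proof. intros H. unfold child1, child2, child3. destruct (Nat.ltb_spec x 3); [lia | auto]. Qed.

Lemma parent_spec j x : parent j = x <-> j = child1 x \/ j = child2 x \/ j = child3 x.
Proof.
  destruct (Nat.ltb_spec x 3) as [Hx|Hx].
  - destruct (Nat.ltb_spec j 9) as [Hj|Hj].
    + do 9 (destruct j as [|j]; [do 3 (destruct x as [|x]; [cbv; lia|]); lia|]). lia.
    + rewrite parent_large by lia. pose proof (div3_bounds j).
      do 3 (destruct x as [|x]; [cbv - [Nat.div]; lia|]). lia.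
  - destruct (children_large x Hx) as [-> [-> ->]].
    destruct (Nat.ltb_spec j 9) as [Hj|Hj].
    + do 9 (destruct j as [|j]; [cbv - [Nat.mul Nat.add]; lia|]). lia.
    + rewrite parent_large by lia. pose proof (div3_bounds j). lia.
Qed.

Lemma neighbours_distinct x :
  parent x <> child1 x /\ parent x <> child2 x /\ parent x <> child3 x /\
  child1 x <> child2 x /\ child1 x <> child3 x /\ child2 x <> child3 x.
Proof.
  destruct (Nat.ltb_spec x 9) as [Hx|Hx].
  - do 9 (destruct x as [|x]; [cbv; lia|]). lia.
  - destruct (children_large x) as [-> [-> ->]]; [lia|].
    rewrite parent_large by lia. pose proof (div3_bounds x). lia.
Qed.

Open Scope R_scope.

(* Children of [0..n] are [0..3n+2] once [n >= 2]; here [n = k + 2]. *)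
Lemma sum_children (u : nat -> R) k :
  sum_f_R0 (fun x => u (child1 x) + u (child2 x) + u (child3 x)) (k + 2)
  = sum_f_R0 u (3 * (k + 2) + 2).
Proof.
  induction k as [|k IH].
  - cbv [sum_f_R0 child1 child2 child3 Nat.ltb Nat.leb nth]. simpl. ring.
  - replace (S k + 2)%nat with (S (k + 2)) by lia.
    replace (3 * S (k + 2) + 2)%nat with (S (S (S (3 * (k + 2) + 2)))) by lia.
    rewrite tech5, IH, !tech5.
    destruct (children_large (S (k + 2))) as [-> [-> ->]]; [lia|].
    replace (3 * S (k + 2))%nat with (S (3 * (k + 2) + 2)) by lia.
    replace (S (3 * (k + 2) + 2) + 1)%nat with (S (S (3 * (k + 2) + 2))) by lia.
    replace (S (3 * (k + 2) + 2) + 2)%nat with (S (S (S (3 * (k + 2) + 2)))) by lia.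
    ring.
Qed.

Lemma sum_parent (u : nat -> R) k :
  sum_f_R0 (fun x => u (parent x)) (3 * (k + 2) + 2) = 3 * sum_f_R0 u (k + 2).
Proof.
  rewrite scal_sum, <- sum_children. apply sum_eq. intros x _.
  rewrite !(proj2 (parent_spec _ x)) by tauto. ring.
Qed.

Definition neighbour_avg (f : nat -> R) (x : nat) : R :=
  (f (parent x) + f (child1 x) + f (child2 x) + f (child3 x)) / 4.

Lemma neighbour_avg_sq_le f x : neighbour_avg f x ^ 2 <=
  (2 * f (parent x) ^ 2 + 6 * (f (child1 x) ^ 2 + f (child2 x) ^ 2 + f (child3 x) ^ 2)) / 16.
Proof.
  unfold neighbour_avg.
  set (a := f (parent x)). set (b := f (child1 x)).
  set (c := f (child2 x)). set (d := f (child3 x)).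
  pose proof (pow2_ge_0 (a - (b + c + d))). pose proof (pow2_ge_0 (b - c)).
  pose proof (pow2_ge_0 (c - d)). pose proof (pow2_ge_0 (b - d)).
  nra.
Qed.

Lemma neighbour_avg_l2 f : in_l2 f ->
  in_l2 (neighbour_avg f) /\ sq_norm (neighbour_avg f) <= 3 / 4 * sq_norm f.
Proof.
  intros Hf. set (u := fun j => f j ^ 2).
  assert (Hu : forall n, 0 <= u n) by (intro; apply pow2_ge_0).
  set (h := fun x => (2 * u (parent x) + 6 * (u (child1 x) + u (child2 x) + u (child3 x))) / 16).
  apply ex_series_nonneg_bounded; [intro; apply pow2_ge_0|].
  intro N.
  apply Rle_trans with (sum_f_R0 h N).
  { apply sum_Rle. intros n _. apply neighbour_avg_sq_le. }
  apply Rle_trans with (sum_f_R0 h (N + 2)).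
  { apply sum_f_R0_mono_nonneg; [|lia]. intro x. unfold h.
    pose proof (Hu (parent x)). pose proof (Hu (child1 x)).
    pose proof (Hu (child2 x)). pose proof (Hu (child3 x)). lra. }
  assert (Eh : sum_f_R0 h (N + 2) =
     2 / 16 * sum_f_R0 (fun x => u (parent x)) (N + 2) +
     6 / 16 * sum_f_R0 (fun x => u (child1 x) + u (child2 x) + u (child3 x)) (N + 2)).
  { rewrite !scal_sum, <- plus_sum. apply sum_eq. intros. unfold h. field. }
  rewrite Eh, sum_children.
  assert (Hp : sum_f_R0 (fun x => u (parent x)) (N + 2) <= 3 * sq_norm f).
  { apply Rle_trans with (sum_f_R0 (fun x => u (parent x)) (3 * (N + 2) + 2)).
    { apply sum_f_R0_mono_nonneg; [intro; apply Hu | lia]. }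
    rewrite sum_parent. apply Rmult_le_compat_l; [lra|].
    apply sum_le_Series_nonneg; [exact Hu | exact Hf]. }
  assert (Hc : sum_f_R0 u (3 * (N + 2) + 2) <= sq_norm f)
    by (apply sum_le_Series_nonneg; [exact Hu | exact Hf]).
  lra.
Qed.

Lemma neighbour_avg_sub f g x :
  neighbour_avg (fun y => f y - g y) x = neighbour_avg f x - neighbour_avg g x.
Proof. unfold neighbour_avg. field. Qed.

Lemma neighbour_avg_is_series (g : nat -> nat -> R) (h : nat -> R) :
  (forall y, is_series (fun k => g k y) (h y)) ->
  forall x, is_series (fun k => neighbour_avg (g k) x) (neighbour_avg h x).
Proof.
  intros Hg x. unfold neighbour_avg.
  apply (is_series_scal_r (/ 4)).
  repeat apply (is_series_plus (V := R_NormedModule)); apply Hg.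
Qed.

Definition avg_matrix : matrixN := fun i j =>
  if ((parent i =? j) || (parent j =? i))%bool then 1 / 4 else 0.

Lemma avg_matrix_sym i j : avg_matrix i j = avg_matrix j i.
Proof. unfold avg_matrix. rewrite Bool.orb_comm. reflexivity. Qed.

Lemma avg_matrix_values i j : avg_matrix i j = 0 \/ avg_matrix i j = 1 / 4.
Proof. unfold avg_matrix. destruct (_ || _)%bool; auto. Qed.

Lemma avg_matrix_neq0 i j : avg_matrix i j <> 0 <->
  j = parent i \/ j = child1 i \/ j = child2 i \/ j = child3 i.
Proof.
  rewrite <- parent_spec. unfold avg_matrix.
  destruct (Nat.eqb_spec (parent i) j), (Nat.eqb_spec (parent j) i); simpl;
    split; intros H; first [lra | tauto | left; congruence | destruct H; congruence].
Qed.

Lemma avg_matrix_neighbour i j :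
  j = parent i \/ j = child1 i \/ j = child2 i \/ j = child3 i -> avg_matrix i j = 1 / 4.
Proof.
  intros H. destruct (avg_matrix_values i j) as [E|E]; [|exact E].
  exfalso. exact (proj2 (avg_matrix_neq0 i j) H E).
Qed.

Lemma avg_matrix_not_neighbour i j :
  ~ (j = parent i \/ j = child1 i \/ j = child2 i \/ j = child3 i) -> avg_matrix i j = 0.
Proof.
  intros H. destruct (avg_matrix_values i j) as [E|E]; [exact E|].
  exfalso. apply H, avg_matrix_neq0. lra.
Qed.

Lemma is_series_single (a : nat) (v : R) : is_series (fun j => if (j =? a)%nat then v else 0) v.
Proof.
  apply is_series_Reals, is_lim_seq_Reals.
  apply is_lim_seq_ext_loc with (fun _ => v); [|apply is_lim_seq_const].
  exists a. intros n Hn. induction Hn as [|n Hn IH]; cbn [sum_f_R0].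
  - destruct a as [|a]; [reflexivity|]. cbn [sum_f_R0]. rewrite Nat.eqb_refl, sum_eq_R0; [ring|].
    intros k Hk. destruct (Nat.eqb_spec k (S a)); [lia | reflexivity].
  - rewrite <- IH. destruct (Nat.eqb_spec (S n) a); [lia | ring].
Qed.

Lemma mat_apply_avg_matrix f x : mat_apply avg_matrix f x = neighbour_avg f x.
Proof.
  set (single := fun a v (j : nat) => if (j =? a)%nat then v else 0).
  assert (Hterm : forall j, single (parent x) (f (parent x) / 4) j
    + single (child1 x) (f (child1 x) / 4) j + single (child2 x) (f (child2 x) / 4) j
    + single (child3 x) (f (child3 x) / 4) j = avg_matrix x j * f j).
  { intro j. unfold single. pose proof (neighbours_distinct x) as Hd.
    destruct (Nat.eqb_spec j (parent x)), (Nat.eqb_spec j (child1 x)),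
      (Nat.eqb_spec j (child2 x)), (Nat.eqb_spec j (child3 x)); try (exfalso; lia).
    all: first [rewrite avg_matrix_neighbour by tauto; subst; field
               | rewrite avg_matrix_not_neighbour by tauto; ring]. }
  unfold mat_apply. apply is_series_unique, (is_series_ext _ _ _ Hterm).
  replace (neighbour_avg f x) with (f (parent x) / 4 + f (child1 x) / 4
    + f (child2 x) / 4 + f (child3 x) / 4) by (unfold neighbour_avg; field).
  repeat apply (is_series_plus (V := R_NormedModule)); apply is_series_single.
Qed.

Lemma avg_matrix_row_support i : support_card4 (fun j => avg_matrix i j <> 0).
Proof.
  destruct (neighbours_distinct i) as (H1 & H2 & H3 & H4 & H5 & H6).
  exists (parent i), (child1 i), (child2 i), (child3 i).
  repeat split; auto; intros; apply avg_matrix_neq0; assumption.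
Qed.

Lemma avg_matrix_col_support j : support_card4 (fun i => avg_matrix i j <> 0).
Proof.
  replace (fun i => avg_matrix i j <> 0) with (fun i => avg_matrix j i <> 0).
  - apply avg_matrix_row_support.
  - apply functional_extensionality. intro i. rewrite avg_matrix_sym. reflexivity.
Qed.

Lemma I_minus_avg_matrix : I_minus avg_matrix = fun f i => f i - neighbour_avg f i.
Proof.
  apply functional_extensionality. intro f. apply functional_extensionality. intro i.
  unfold I_minus. rewrite mat_apply_avg_matrix. reflexivity.
Qed.

Lemma not_invertible_linf_of_collision (T : (nat -> R) -> nat -> R) f g :
  in_linf f -> in_linf g -> T f = T g -> f <> g -> ~ invertible_linf T.
Proof.
  intros Hf Hg HT Hfg (S & _ & _ & HST & _).
  apply Hfg. rewrite <- (HST f Hf), <- (HST g Hg), HT. reflexivity.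
Qed.

Theorem mainTheorem1 :
  exists M : matrixN,
    (forall i j, M i j = M j i) /\
    (forall i j, M i j = 0 \/ M i j = 1 / 4) /\
    (forall i, support_card4 (fun j => M i j <> 0)) /\
    (forall j, support_card4 (fun i => M i j <> 0)) /\
    invertible_l2 (I_minus M) /\
    ~ invertible_linf (I_minus M).
Proof.
  exists avg_matrix.
  split; [exact avg_matrix_sym|]. split; [exact avg_matrix_values|].
  split; [exact avg_matrix_row_support|]. split; [exact avg_matrix_col_support|].
  rewrite I_minus_avg_matrix. split.
  - apply (neumann_invertible_l2 neighbour_avg (3 / 4)).
    + lra.
    + exact neighbour_avg_sub.
    + exact neighbour_avg_l2.
    + exact neighbour_avg_is_series.
  - apply (not_invertible_linf_of_collision _ (fun _ => 1) (fun _ => 0)).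
    + exists 1. intro. rewrite Rabs_R1. lra.
    + exists 0. intro. rewrite Rabs_R0. lra.
    + apply functional_extensionality. intro i. unfold neighbour_avg. field.
    + intro E. apply R1_neq_R0, (f_equal (fun g => g 0%nat) E).
Qed.
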